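(* Let $N,K\ge 1$, $\mathcal{L}\in\mathbb{R}^{N\times N}$, $e^{(0)}\in\mathbb{R}^N$, and $C_1,\dots,C_K\in\mathbb{R}^{N\times N}$. Suppose there is a real orthogonal matrix $P$ and real diagonal matrices $\Lambda_1,\dots,\Lambda_K$ with $I_N-C_j\mathcal{L}=P\Lambda_jP^{-1}$ and $\|I_N-C_j\mathcal{L}\|_2\le 1$ for all $j\in[K]$. Define $h:[K]^*\to\mathbb{R}$ by $h(S)=\|(I_N-C_{S_{|S|}}\mathcal{L})\cdots(I_N-C_{S_1}\mathcal{L})e^{(0)}\|_2^2$ (with $h(\emptyset)=\|e^{(0)}\|_2^2$). Then $h$ is sequence supermodular: for all $S,S'\in[K]^*$ with $S\preceq S'$ and all $\omega\in[K]$, $$h(S)-h(S\oplus\omega)\ge h(S')-h(S'\oplus\omega).$$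
   Context: $[K]=\{1,\dots,K\}$; $[K]^*$ is the set of all finite sequences (including the empty sequence) with entries in $[K]$. $S\oplus S'$ denotes concatenation and $S\oplus\omega=S\oplus(\omega)$. $S\preceq S'$ ($S$ is a prefix of $S'$) means $S'=S\oplus L$ for some $L\in[K]^*$. $\|\cdot\|_2$ on matrices is the operator (spectral) norm. *)

From HB Require Import structures.
From mathcomp Require Import all_boot all_order all_algebra.
From mathcomp Require Import all_classical all_reals.
Set Implicit Arguments. Unset Strict Implicit. Unset Printing Implicit Defensive.
Import Order.TTheory GRing.Theory Num.Theory.
Local Open Scope ring_scope.
Local Open Scope classical_set_scope.

Definition vnorm (R : realType) (n : nat) (x : 'cV[R]_n) : R :=
  Num.sqrt (\sum_(i < n) x i 0 ^+ 2).

Definition opnorm2 (R : realType) (n : nat) (A : 'M[R]_n) : R :=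
  sup [set vnorm (A *m x) | x in [set x : 'cV[R]_n | vnorm x <= 1]].

Definition iterM (R : realType) (N K : nat) (L : 'M[R]_N)
  (C : 'I_K -> 'M[R]_N) (j : 'I_K) : 'M[R]_N := 1%:M - C j *m L.

(* (I - C_{S_|S|} L) ... (I - C_{S_1} L) e0 : apply S_1 first. *)
Definition errvec (R : realType) (N K : nat) (L : 'M[R]_N)
  (C : 'I_K -> 'M[R]_N) (e0 : 'cV[R]_N) (S : seq 'I_K) : 'cV[R]_N :=
  foldl (fun v j => iterM L C j *m v) e0 S.

Definition hfun (R : realType) (N K : nat) (L : 'M[R]_N)
  (C : 'I_K -> 'M[R]_N) (e0 : 'cV[R]_N) (S : seq 'I_K) : R :=
  vnorm (errvec L C e0 S) ^+ 2.

Definition seq_prefix (T : Type) (S S' : seq T) : Prop :=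
  exists Lt : seq T, S' = S ++ Lt.

(** In the common eigenbasis [P] every iteration matrix acts diagonally, so
    coordinate [z_i(S)] of the rotated error [P^T e(S)] is the initial
    coordinate times the product of the eigenvalues [Lam_j i i] along [S].
    Hence [h S - h (S ++ [w]) = \sum_i (1 - Lam_w i i ^ 2) z_i(S) ^ 2], whose
    weights are nonnegative because the spectral norm bound forces
    [|Lam_j i i| <= 1]; for the same reason each [z_i(S) ^ 2] can only
    decrease when [S] is extended, which gives the supermodularity. *)

From Pilot Require Import Defs.
From HB Require Import structures.
From mathcomp Require Import all_boot all_order all_algebra.
From mathcomp Require Import all_classical all_reals.
Import Order.TTheory GRing.Theory Num.Theory.
Local Open Scope ring_scope.

Section Orbit.
Context {R : pzRingType} {N K : nat}.
Implicit Types (A D : 'I_K -> 'M[R]_N) (x : 'cV[R]_N) (S T : seq 'I_K).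

Definition orbit A x S : 'cV[R]_N := foldl (fun v j => A j *m v) x S.

Lemma orbit_rcons A x S w : orbit A x (rcons S w) = A w *m orbit A x S.
Proof. exact: foldl_rcons. Qed.

Lemma orbit_cat A x S T : orbit A x (S ++ T) = orbit A (orbit A x S) T.
Proof. exact: foldl_cat. Qed.

Lemma orbit_conj A D (Q : 'M[R]_N) x S :
  Q^T *m Q = 1%:M -> (forall j, A j = Q *m D j *m Q^T) ->
  orbit A (Q *m x) S = Q *m orbit D x S.
Proof.
move=> hQ hA; elim: S x => [|j S IH] x //=.
by rewrite -IH hA -!mulmxA (mulmxA Q^T) hQ mul1mx.
Qed.

End Orbit.

Section Norms.
Variables (R : realType) (N : nat).
Implicit Types (A D Q : 'M[R]_N) (x : 'cV[R]_N).

Lemma vnorm_sqr x : vnorm x ^+ 2 = \sum_i x i 0 ^+ 2.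
Proof. by rewrite sqr_sqrtr // sumr_ge0 // => i _; exact: sqr_ge0. Qed.

Lemma vnorm_orthogonal Q x : Q^T *m Q = 1%:M -> vnorm (Q *m x) = vnorm x.
Proof.
have sumsqE (y : 'cV[R]_N) : \sum_i y i 0 ^+ 2 = (y^T *m y) 0 0 :> R.
  by rewrite mxE; apply: eq_bigr => i _; rewrite !mxE expr2.
move=> hQ; rewrite /vnorm !sumsqE trmx_mul mulmxA -(mulmxA _ _ Q) hQ.
by rewrite mulmx1.
Qed.

Lemma normr_coord_le_vnorm x i : `|x i 0| <= vnorm x.
Proof.
rewrite -sqrtr_sqr ler_sqrt; last by rewrite sumr_ge0 // => k _; exact: sqr_ge0.
by rewrite (bigD1 i) //= lerDl sumr_ge0 // => k _; exact: sqr_ge0.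
Qed.

Lemma vnorm_mul_le_rowsum A x : vnorm x <= 1 ->
  vnorm (A *m x) <= Num.sqrt (\sum_i (\sum_j `|A i j|) ^+ 2).
Proof.
move=> hx; rewrite ler_sqrt; last by rewrite sumr_ge0 // => i _; exact: sqr_ge0.
apply: ler_sum => i _.
rewrite -real_normK ?num_real // ler_sqr ?nnegrE ?sumr_ge0 //.
rewrite mxE; apply: le_trans (ler_norm_sum _ _ _) _; apply: ler_sum => j _.
rewrite normrM ler_piMr //.
exact: le_trans (normr_coord_le_vnorm x j) hx.
Qed.

Lemma vnorm_mul_le_opnorm2 A x : vnorm x <= 1 -> vnorm (A *m x) <= opnorm2 A.
Proof.
move=> hx; apply: ub_le_sup; last by exists x.
by exists (Num.sqrt (\sum_i (\sum_j `|A i j|) ^+ 2)) => _ [y hy <-];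
  exact: vnorm_mul_le_rowsum.
Qed.

Lemma vnorm_scale_delta (a : R) (i : 'I_N) :
  vnorm (a *: (delta_mx i 0 : 'cV[R]_N)) = `|a|.
Proof.
rewrite /vnorm (bigD1 i) //= big1 => [|k hk]; last first.
  by rewrite !mxE (negbTE hk) mulr0 expr0n.
by rewrite addr0 !mxE !eqxx mulr1 sqrtr_sqr.
Qed.

Lemma diag_mul_coordE D x i : is_diag_mx D -> (D *m x) i 0 = D i i * x i 0.
Proof.
move=> /is_diag_mxP hD; rewrite mxE (bigD1 i) //= big1 ?addr0 // => k hk.
by rewrite hD ?mul0r // eq_sym.
Qed.

Lemma diag_mul_delta D (i : 'I_N) : is_diag_mx D ->
  D *m delta_mx i 0 = D i i *: (delta_mx i 0 : 'cV[R]_N).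
Proof.
move=> hD; apply/matrixP => k l; rewrite ord1 diag_mul_coordE // !mxE.
by case: eqP => [->|]; rewrite ?mulr0.
Qed.

Lemma diag_entry_le_opnorm2 Q D i :
  Q^T *m Q = 1%:M -> is_diag_mx D -> `|D i i| <= opnorm2 (Q *m D *m Q^T).
Proof.
move=> hQ hD.
have := vnorm_mul_le_opnorm2 (Q *m D *m Q^T) (Q *m delta_mx i 0).
rewrite vnorm_orthogonal // -{1}(scale1r (delta_mx i 0)) vnorm_scale_delta.
rewrite normr1 lexx -!mulmxA (mulmxA Q^T) hQ mul1mx vnorm_orthogonal //.
by rewrite diag_mul_delta // vnorm_scale_delta; apply.
Qed.

End Norms.

Section DiagonalContractions.
Variables (R : realType) (N K : nat) (D : 'I_K -> 'M[R]_N).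
Hypothesis D_diag : forall j, is_diag_mx (D j).
Hypothesis D_contract : forall j i, `|D j i i| <= 1.

Lemma diag_sqr_le1 j i : D j i i ^+ 2 <= 1.
Proof. by rewrite -real_normK ?num_real // exprn_ile1. Qed.

Lemma orbit_coord_sqr_le x T i : orbit D x T i 0 ^+ 2 <= x i 0 ^+ 2.
Proof.
elim: T x => [|j T IH] x //=; apply: le_trans (IH _) _.
by rewrite diag_mul_coordE // exprMn ler_piMl ?sqr_ge0 ?diag_sqr_le1.
Qed.

Lemma vnorm_orbit_step x S w :
  vnorm (orbit D x S) ^+ 2 - vnorm (orbit D x (rcons S w)) ^+ 2 =
  \sum_i (1 - D w i i ^+ 2) * orbit D x S i 0 ^+ 2.
Proof.
rewrite !vnorm_sqr orbit_rcons -sumrB; apply: eq_bigr => i _.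
by rewrite diag_mul_coordE // exprMn mulrBl mul1r.
Qed.

Lemma vnorm_orbit_supermodular x S T w :
  vnorm (orbit D x (S ++ T)) ^+ 2 - vnorm (orbit D x (rcons (S ++ T) w)) ^+ 2
  <= vnorm (orbit D x S) ^+ 2 - vnorm (orbit D x (rcons S w)) ^+ 2.
Proof.
rewrite !vnorm_orbit_step; apply: ler_sum => i _.
rewrite ler_wpM2l ?subr_ge0 ?diag_sqr_le1 //.
by rewrite orbit_cat orbit_coord_sqr_le.
Qed.

End DiagonalContractions.

Theorem proposition2 (R : realType) (N K : nat) (hN : (0 < N)%N) (hK : (0 < K)%N)
  (L : 'M[R]_N) (e0 : 'cV[R]_N) (C : 'I_K -> 'M[R]_N)
  (P : 'M[R]_N) (Lam : 'I_K -> 'M[R]_N)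
  (hPorth : P^T *m P = 1%:M /\ P *m P^T = 1%:M)
  (hLam : forall j, is_diag_mx (Lam j))
  (hdiag : forall j, 1%:M - C j *m L = P *m Lam j *m invmx P)
  (hnorm : forall j, opnorm2 (1%:M - C j *m L) <= 1) :
  forall (S S' : seq 'I_K) (w : 'I_K), seq_prefix S S' ->
    hfun L C e0 S - hfun L C e0 (rcons S w)
      >= hfun L C e0 S' - hfun L C e0 (rcons S' w).
Proof.
move=> S _ w [T ->]; case: hPorth => hPtP hPPt.
have invP : invmx P = P^T.
  have [_ Punit] := mulmx1_unit hPtP.
  by rewrite -[LHS]mul1mx -hPtP -mulmxA mulmxV // mulmx1.
have iterE j : Defs.iterM L C j = P *m Lam j *m P^T.
  by rewrite /Defs.iterM hdiag invP.
have Lam_contract j i : `|Lam j i i| <= 1.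
  by apply: le_trans (hnorm j); rewrite hdiag invP diag_entry_le_opnorm2.
have hfunE U : hfun L C e0 U = vnorm (orbit Lam (P^T *m e0) U) ^+ 2.
  rewrite /hfun -[e0 in errvec _ _ e0]mul1mx -hPPt -mulmxA.
  have -> : errvec L C (P *m (P^T *m e0)) U = P *m orbit Lam (P^T *m e0) U.
    exact: orbit_conj hPtP iterE.
  by rewrite vnorm_orthogonal.
by rewrite !hfunE vnorm_orbit_supermodular.
Qed.
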